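(* Let $n>24$, $0<\epsilon<\frac13$, $\delta>0$, $s>0$, and let $m=\epsilon^{-2}n^{1+\delta}$ (assumed to be an integer). Then $$\mathsf P\left\{ x\in U^m:\ \left|\sum_{i=1}^n \frac{k_i(x)(k_i(x)-1)}{m(m-1)}\cdot\frac{1}{\|p\|^2}-1\right|\le \epsilon\left(3+\frac{6s}{n^{\delta/2}}+\frac{5s^2\epsilon}{n^{\delta}}\right)\right\}\ \ge\ 1-\frac{10}{9}e^{-s^2/4}.$$
   Context: Standing setup: $U$ is a finite set (the key space) with a probability measure $q$; $T=\{1,\dots,n\}$; $h:U\to T$ is an arbitrary function. $p_i=\sum_{u\in h^{-1}(i)}q(u)$ and $\|p\|^2=\sum_{i=1}^n p_i^2$. $U^m$ carries the product measure $q^m$ (keys chosen independently), and $\mathsf P$ denotes probability under $q^m$. For $x=(x_1,\dots,x_m)\in U^m$, $k_i(x)=|\{j: h(x_j)=i\}|$ (number of keys of $x$ hashed to slot $i$, with multiplicity). *)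

From HB Require Import structures.
From mathcomp Require Import all_boot all_order all_algebra.
From mathcomp Require Import reals sequences exp.
Set Implicit Arguments. Unset Strict Implicit. Unset Printing Implicit Defensive.
Import Order.TTheory GRing.Theory Num.Theory.
Local Open Scope ring_scope.

(* Slot probability p_i = sum_{u in h^{-1}(i)} q(u); slots T = 'I_n (i.e. {0..n-1} ~ {1..n}). *)
Definition pslot (R : realType) (U : finType) (n : nat) (q : U -> R) (h : U -> 'I_n)
  (i : 'I_n) : R := \sum_(u | h u == i) q u.

Definition normp2 (R : realType) (U : finType) (n : nat) (q : U -> R) (h : U -> 'I_n) : R :=
  \sum_(i < n) pslot q h i ^+ 2.

Definition kcount (U : finType) (n m : nat) (h : U -> 'I_n) (x : {ffun 'I_m -> U})
  (i : 'I_n) : nat := #|[set j : 'I_m | h (x j) == i]|.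

Definition probm (R : realType) (U : finType) (m : nat) (q : U -> R)
  (A : pred {ffun 'I_m -> U}) : R :=
  \sum_(x : {ffun 'I_m -> U} | A x) \prod_(j < m) q (x j).

From HB Require Import structures.
From mathcomp Require Import all_boot all_order all_algebra all_fingroup.
From mathcomp Require Import reals sequences exp.
From mathcomp Require Import zify ring lra.
Import Order.TTheory GRing.Theory Num.Theory.
Local Open Scope ring_scope.
Set Implicit Arguments. Unset Strict Implicit. Unset Printing Implicit Defensive.

(* The statistic Z = sum_i k_i (k_i - 1) / (m (m - 1)) is the frequency of colliding
   ordered pairs of keys, with mean ||p||^2.  As Hoeffding observed for U-statistics, Z is
   the average over all permutations of the keys of W / (m/2), where W counts collisions
   among the m/2 disjoint pairs (x_1, x_2), (x_3, x_4), ...; these are independent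
   Bernoulli(||p||^2) variables.  By Jensen's inequality the moment generating function of
   Z is at most that of W / (m/2), i.e. E exp(th Z) <= exp((m/2) ||p||^2 (e^(th/(m/2)) - 1)),
   and e^l <= 1 + l + 2 l^2 (l <= 1/2) turns this into Chernoff bounds for both tails.
   With m = eps^-2 n^(1+delta) and ||p||^2 >= 1/n their exponents exceed s^2/4. *)

Definition fcons (U : finType) m (u : U) (y : {ffun 'I_m -> U}) : {ffun 'I_m.+1 -> U} :=
  [ffun i => if unlift ord0 i is Some j then y j else u].

Lemma fcons0 (U : finType) m (u : U) (y : {ffun 'I_m -> U}) : fcons u y ord0 = u.
Proof. by rewrite ffunE unlift_none. Qed.

Lemma fconsS (U : finType) m (u : U) (y : {ffun 'I_m -> U}) j :
  fcons u y (lift ord0 j) = y j.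
Proof. by rewrite ffunE liftK. Qed.

Definition fperm (U : finType) m (x : {ffun 'I_m -> U}) (s : {perm 'I_m}) :
  {ffun 'I_m -> U} := [ffun j => x (s j)].

Section ProductExpectation.
Variables (R : realType) (U : finType) (q : U -> R).

Definition expectm m (F : {ffun 'I_m -> U} -> R) : R :=
  \sum_(x : {ffun 'I_m -> U}) (\prod_(j < m) q (x j)) * F x.

Lemma eq_expectm m (F G : {ffun 'I_m -> U} -> R) : F =1 G -> expectm F = expectm G.
Proof. by move=> FG; apply: eq_bigr => x _; rewrite FG. Qed.

Lemma expectmZ m c (F : {ffun 'I_m -> U} -> R) :
  expectm (fun x => c * F x) = c * expectm F.
Proof. by rewrite /expectm mulr_sumr; apply: eq_bigr => x _; rewrite mulrCA. Qed.

Lemma expectmD m (F G : {ffun 'I_m -> U} -> R) :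
  expectm (fun x => F x + G x) = expectm F + expectm G.
Proof. by rewrite /expectm -big_split; apply: eq_bigr => x _; rewrite mulrDr. Qed.

Lemma expectm_sum m (I : finType) (F : I -> {ffun 'I_m -> U} -> R) :
  expectm (fun x => \sum_i F i x) = \sum_i expectm (F i).
Proof. by rewrite /expectm exchange_big; apply: eq_bigr => x _; rewrite mulr_sumr. Qed.

Lemma expectm_perm m (s : {perm 'I_m}) (F : {ffun 'I_m -> U} -> R) :
  expectm (fun x => F (fperm x s)) = expectm F.
Proof.
have fpermK x : fperm (fperm x s) s^-1 = x.
  by apply/ffunP => j; rewrite !ffunE permKV.
have fpermKV x : fperm (fperm x s^-1) s = x.
  by apply/ffunP => j; rewrite !ffunE permK.
rewrite /expectm (reindex (fun y => fperm y s^-1)) /=; last first.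
  by exists (fun x => fperm x s) => x _; rewrite (fpermK, fpermKV).
apply: eq_bigr => y _; rewrite fpermKV; congr (_ * _).
by rewrite (reindex_inj (@perm_inj _ s)); apply: eq_bigr => j _; rewrite ffunE permK.
Qed.

Lemma expectm_cons m (F : {ffun 'I_m.+1 -> U} -> R) :
  expectm F = \sum_u q u * expectm (fun y => F (fcons u y)).
Proof.
rewrite /expectm; under [RHS]eq_bigr do rewrite big_distrr /=.
rewrite pair_big /= (reindex (fun p => fcons p.1 p.2)) /=; last first.
  exists (fun x => (x ord0, [ffun j => x (lift ord0 j)])) => [[u y] _|x _] /=.
    by rewrite fcons0; congr pair; apply/ffunP => j; rewrite ffunE fconsS.
  by apply/ffunP => i; rewrite ffunE; case: unliftP => [j ->|->]; rewrite ?ffunE.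
apply: eq_bigr => -[u y] _ /=; rewrite big_ord_recl fcons0 mulrA.
by congr (_ * _ * _); apply: eq_bigr => j _; rewrite fconsS.
Qed.

Lemma probmE m (A : pred {ffun 'I_m -> U}) : probm q A = expectm (fun x => (A x)%:R).
Proof.
rewrite /probm /expectm big_mkcond /=.
by apply: eq_bigr => x _; case: (A x); rewrite ?mulr1 ?mulr0.
Qed.

Hypothesis q_ge0 : forall u, 0 <= q u.

Lemma ler_expectm m (F G : {ffun 'I_m -> U} -> R) :
  (forall x, F x <= G x) -> expectm F <= expectm G.
Proof. by move=> FG; apply: ler_sum => x _; rewrite ler_wpM2l ?prodr_ge0. Qed.

Lemma probm_ge0 m (A : pred {ffun 'I_m -> U}) : 0 <= probm q A.
Proof. by apply: sumr_ge0 => x _; apply: prodr_ge0. Qed.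

Lemma probm_le_expectm_expR m (A : pred {ffun 'I_m -> U}) (g : {ffun 'I_m -> U} -> R) :
  (forall x, A x -> 0 <= g x) -> probm q A <= expectm (fun x => expR (g x)).
Proof.
move=> Ag; rewrite probmE; apply: ler_expectm => x.
case: (boolP (A x)) => [/Ag g0|_]; last exact: expR_ge0.
by apply: le_trans (expR_ge1Dx _); rewrite lerDl.
Qed.

Lemma le_probm m (A B : pred {ffun 'I_m -> U}) :
  (forall x, A x -> B x) -> probm q A <= probm q B.
Proof.
move=> AB; rewrite !probmE; apply: ler_expectm => x.
by case: (boolP (A x)) => [/AB ->|_] //=; rewrite ler0n.
Qed.

Lemma probm_predU m (A B : pred {ffun 'I_m -> U}) :
  probm q (predU A B) <= probm q A + probm q B.
Proof.
rewrite !probmE -expectmD; apply: ler_expectm => x /=.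
by case: (A x); case: (B x); rewrite /= ?addr0 ?add0r ?lerDl ?ler01.
Qed.

Hypothesis q_sum1 : \sum_u q u = 1.

Lemma expectm1 m : expectm (fun _ : {ffun 'I_m -> U} => 1) = 1.
Proof.
rewrite /expectm; under eq_bigr do rewrite mulr1.
rewrite -(bigA_distr_bigA (fun (_ : 'I_m) u => q u)) /=.
by rewrite big1 // => i _; rewrite q_sum1.
Qed.

Lemma probmC m (A : pred {ffun 'I_m -> U}) : probm q A = 1 - probm q (predC A).
Proof.
rewrite !probmE -[X in _ = X - _](expectm1 m) -mulN1r -expectmZ -expectmD.
by apply: eq_expectm => x /=; case: (A x); rewrite /= mulN1r ?subrr ?subr0.
Qed.

End ProductExpectation.

Section Collisions.
Variables (R : realType) (U : finType) (n : nat) (h : U -> 'I_n).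

Definition coll (u v : U) : R := (h u == h v)%:R.

Section FixedLength.
Variable m : nat.
Implicit Types x : {ffun 'I_m -> U}.

Definition ncoll x : R := \sum_(a : 'I_m) \sum_(b | b != a) coll (x a) (x b).

Lemma ncoll_ge0 x : 0 <= ncoll x.
Proof. by apply: sumr_ge0 => a _; apply: sumr_ge0 => b _; rewrite ler0n. Qed.

Lemma kcount_ncoll x :
  \sum_(i < n) (kcount h x i)%:R * ((kcount h x i)%:R - 1) = ncoll x.
Proof.
have kcountE i : (kcount h x i)%:R = \sum_j ((h (x j) == i)%:R : R).
  rewrite /kcount -sum1_card natr_sum [LHS]big_mkcond /=.
  by apply: eq_bigr => j _; rewrite inE; case: eqP.
have sum_eq1 i0 : \sum_(i < n) ((i0 == i)%:R : R) = 1.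
  by rewrite (bigD1 i0) //= eqxx big1 ?addr0 // => i; rewrite eq_sym => /negbTE->.
have sum_k : \sum_(i < n) (kcount h x i)%:R = \sum_(a : 'I_m) 1 :> R.
  under eq_bigr do rewrite kcountE.
  by rewrite exchange_big; apply: eq_bigr => j _; rewrite sum_eq1.
have sum_k2 : \sum_(i < n) (kcount h x i)%:R * (kcount h x i)%:R =
    \sum_(a : 'I_m) \sum_(b : 'I_m) coll (x a) (x b).
  under eq_bigr do rewrite kcountE mulr_suml.
  rewrite exchange_big; apply: eq_bigr => a _.
  under eq_bigr do rewrite mulr_sumr.
  rewrite exchange_big; apply: eq_bigr => b _; rewrite /coll.
  case: (eqVneq (h (x a)) (h (x b))) => [->|hab].
    by under eq_bigr do rewrite -natrM mulnb andbb; rewrite sum_eq1.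
  rewrite big1 // => i _; rewrite -natrM mulnb.
  by case: eqP => [<-|_]; rewrite ?andbF // eq_sym (negbTE hab).
under eq_bigr do rewrite mulrBr mulr1.
rewrite sumrB sum_k sum_k2 -sumrB; apply: eq_bigr => a _.
by rewrite (bigD1 a) //= /coll eqxx addrC addrK.
Qed.

Definition perm_coll x (a b : 'I_m) : R :=
  \sum_(s : {perm 'I_m}) coll (x (s a)) (x (s b)).

Lemma perm_coll_indep x (a b a' b' : 'I_m) :
  a != b -> a' != b' -> perm_coll x a' b' = perm_coll x a b.
Proof.
move=> ab ab'; set t1 := tperm a' a; set t2 := tperm (t1 b') b.
have t1b'a : t1 b' != a.
  by rewrite -[X in _ != X](tpermL a' a) (inj_eq perm_inj) eq_sym.
have t12a : (t1 * t2)%g a' = a by rewrite permM tpermL tpermD // eq_sym.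
have t12b : (t1 * t2)%g b' = b by rewrite permM tpermL.
rewrite /perm_coll (reindex_inj (mulgI (t1 * t2)%g)).
by apply: eq_bigr => s _; rewrite !(permM (t1 * t2)%g) t12a t12b.
Qed.

Lemma sum_perm_coll x :
  \sum_(a : 'I_m) \sum_(b | b != a) perm_coll x a b = m`!%:R * ncoll x.
Proof.
under eq_bigr do rewrite exchange_big /=.
rewrite exchange_big /=.
transitivity (\sum_(s : {perm 'I_m}) ncoll x); last by rewrite sumr_const card_Sn mulr_natl.
apply: eq_bigr => s _.
rewrite /ncoll [RHS](reindex_inj (@perm_inj _ s)); apply: eq_bigr => a _.
rewrite [RHS](reindex_inj (@perm_inj _ s)).
by apply: eq_big => // b; rewrite (inj_eq perm_inj).
Qed.

Lemma perm_coll_ncoll x (a0 b0 : 'I_m) : a0 != b0 ->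
  m%:R * (m%:R - 1) * perm_coll x a0 b0 = m`!%:R * ncoll x.
Proof.
move=> ab; rewrite -sum_perm_coll.
transitivity (\sum_(a : 'I_m) \sum_(b | b != a) perm_coll x a0 b0); last first.
  apply: eq_bigr => a _; apply: eq_bigr => b ba.
  by rewrite (perm_coll_indep x ab) // eq_sym.
have card_neq (a : 'I_m) : #|[pred b : 'I_m | b != a]| = m.-1.
  by have := cardC1 a; rewrite card_ord => <-; apply: eq_card.
under eq_bigr do rewrite sumr_const card_neq.
have m0 : (0 < m)%N by case: m a0 {x ab b0} => [[]|].
have -> : (m%:R - 1 : R) = m.-1%:R by rewrite -[in LHS](prednK m0) -natr1 addrK.
by rewrite sumr_const card_ord -mulrnA mulrC -[RHS]mulr_natr natrM [_ * m%:R]mulrC.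
Qed.

Lemma pair_fst_subproof (r : 'I_m./2) : (r.*2 < m)%N.
Proof. by have := ltn_ord r; rewrite geq_half_double doubleS; lia. Qed.

Lemma pair_snd_subproof (r : 'I_m./2) : (r.*2.+1 < m)%N.
Proof. by have := ltn_ord r; rewrite geq_half_double doubleS. Qed.

Definition pair_coll x : R :=
  \sum_(r < m./2) coll (x (Ordinal (pair_fst_subproof r))) (x (Ordinal (pair_snd_subproof r))).

Lemma sum_pair_coll_perm x (a0 b0 : 'I_m) : a0 != b0 ->
  \sum_(s : {perm 'I_m}) pair_coll (fperm x s) = (m./2)%:R * perm_coll x a0 b0.
Proof.
move=> ab; rewrite exchange_big /=.
transitivity (\sum_(r < m./2) perm_coll x a0 b0); last by rewrite sumr_const card_ord mulr_natl.
apply: eq_bigr => r _.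
have pair_neq : Ordinal (pair_fst_subproof r) != Ordinal (pair_snd_subproof r).
  by rewrite -val_eqE /= eqn_leq ltnn andbF.
rewrite -(perm_coll_indep x ab pair_neq).
by apply: eq_bigr => s _; rewrite !ffunE.
Qed.

Definition coll_freq x : R := ncoll x / (m%:R * (m%:R - 1)).

Lemma coll_freq_ge0 x : 0 <= coll_freq x.
Proof.
rewrite /coll_freq divr_ge0 ?ncoll_ge0 //; case: m x => [|k] _; rewrite ?mul0r //.
by rewrite -natr1 addrK mulr_ge0 ?addr_ge0.
Qed.

Lemma coll_freq_mean_pair_coll x : (2 <= m)%N ->
  coll_freq x =
  (m`!%:R)^-1 * \sum_(s : {perm 'I_m}) (m./2)%:R^-1 * pair_coll (fperm x s).
Proof.
rewrite /coll_freq => m2; have m0 : (0 < m)%N by apply: leq_trans m2.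
have ab : Ordinal m0 != Ordinal m2 by [].
have mm1 : m%:R * (m%:R - 1) != 0 :> R.
  by rewrite mulf_neq0 ?subr_eq0 ?pnatr_eq0 ?pnatr_eq1 -?lt0n //; lia.
have k0 : (m./2)%:R != 0 :> R by rewrite pnatr_eq0 -lt0n half_gt0.
have f0 : m`!%:R != 0 :> R by rewrite pnatr_eq0 -lt0n fact_gt0.
rewrite -mulr_sumr (sum_pair_coll_perm x ab) mulKf //.
rewrite -[ncoll x](mulKf f0) -(perm_coll_ncoll x ab).
by rewrite [_ * perm_coll _ _ _]mulrC mulrA mulfK.
Qed.

End FixedLength.

Lemma pair_coll_cons2 m u v (y : {ffun 'I_m -> U}) :
  pair_coll (fcons u (fcons v y)) = coll u v + pair_coll y.
Proof.
rewrite /pair_coll big_ord_recl; congr (coll _ _ + _).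
- by rewrite (_ : Ordinal _ = ord0) ?fcons0 //; apply: val_inj.
- by rewrite (_ : Ordinal _ = lift ord0 ord0) ?fconsS ?fcons0 //; apply: val_inj.
have fcons2E (j : 'I_m.+2) (i : 'I_m) : j = i.+2 :> nat -> fcons u (fcons v y) j = y i.
  by move=> ji; rewrite (_ : j = lift ord0 (lift ord0 i)) ?fconsS //; apply: val_inj.
apply: eq_bigr => r _.
by rewrite (fcons2E _ (Ordinal (pair_fst_subproof r))) ?(fcons2E _ (Ordinal (pair_snd_subproof r))).
Qed.

End Collisions.

Lemma expR_mean_le (R : realType) (I : finType) (y : I -> R) : (0 < #|I|)%N ->
  expR ((#|I|%:R)^-1 * \sum_i y i) <= (#|I|%:R)^-1 * \sum_i expR (y i).
Proof.
move=> I0; set N := #|I|%:R; set a := N^-1 * \sum_i y i.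
have N0 : 0 < N by rewrite ltr0n.
have tangent i : expR a * (1 + (y i - a)) <= expR (y i).
  by rewrite -[X in _ <= expR X](subrKC a) expRD ler_wpM2l ?expR_ge0 ?expR_ge1Dx.
rewrite -(ler_pM2l N0) mulrA mulfV ?gt_eqF // mul1r.
apply: le_trans (ler_sum _ (fun i _ => tangent i)).
rewrite -mulr_sumr big_split /= sumrB !sumr_const -/N.
have -> : \sum_i y i = N * a by rewrite /a mulrA mulfV ?gt_eqF // mul1r.
by rewrite -(mulr_natr a #|I|) -/N [a * N]mulrC subrr addr0 mulrC.
Qed.

Section MomentGeneratingFunction.
Variables (R : realType) (U : finType) (q : U -> R) (n : nat) (h : U -> 'I_n).
Hypotheses (q_ge0 : forall u, 0 <= q u) (q_sum1 : \sum_u q u = 1).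

Lemma sum_coll : \sum_u \sum_v q u * q v * coll R h u v = normp2 q h.
Proof.
transitivity (\sum_u q u * pslot q h (h u)).
  apply: eq_bigr => u _; rewrite /pslot mulr_sumr [RHS]big_mkcond /=.
  by apply: eq_bigr => v _; rewrite /coll eq_sym; case: eqP; rewrite ?mulr1 ?mulr0.
rewrite /normp2 (partition_big h predT) //=; apply: eq_bigr => i _.
by rewrite expr2 [in RHS]/pslot mulr_suml; apply: eq_bigr => u /eqP ->.
Qed.

Lemma normp2_ge0 : 0 <= normp2 q h.
Proof. by apply: sumr_ge0 => i _; apply: sqr_ge0. Qed.

Lemma normp2_ge_inv : (0 < n)%N -> n%:R^-1 <= normp2 q h.
Proof.
move=> n0; have nR : 0 < n%:R :> R by rewrite ltr0n.
have sum_pslot : \sum_(i < n) pslot q h i = 1.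
  by rewrite -q_sum1 (partition_big h predT).
have expand i : (pslot q h i - n%:R^-1) ^+ 2 =
    pslot q h i ^+ 2 - 2 * n%:R^-1 * pslot q h i + n%:R^-1 ^+ 2 by ring.
have : 0 <= \sum_(i < n) (pslot q h i - n%:R^-1) ^+ 2 by apply: sumr_ge0 => i _; apply: sqr_ge0.
under eq_bigr do rewrite expand.
rewrite big_split sumrB -mulr_sumr sum_pslot sumr_const card_ord -/(normp2 q h) /=.
by rewrite -[_ ^+ 2 *+ n]mulr_natr expr2 mulfVK ?gt_eqF //; lra.
Qed.

Lemma expR_coll_mean mu :
  \sum_u \sum_v q u * q v * expR (mu * coll R h u v) = 1 + normp2 q h * (expR mu - 1).
Proof.
have expR_coll u v : expR (mu * coll R h u v) = 1 + coll R h u v * (expR mu - 1).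
  by rewrite /coll; case: (h u == h v); rewrite ?mulr1 ?mulr0 ?mul1r ?mul0r ?expR0 ?addr0 ?subrKC.
under eq_bigr do under eq_bigr do rewrite expR_coll mulrDr mulr1 mulrA.
under eq_bigr do rewrite big_split /=.
rewrite big_split /= -sum_coll mulr_suml; congr (_ + _).
  by rewrite -[RHS]q_sum1; apply: eq_bigr => u _; rewrite -mulr_sumr q_sum1 mulr1.
by apply: eq_bigr => u _; rewrite mulr_suml.
Qed.

Lemma expectm_expR_pair_coll m mu :
  expectm q (fun x : {ffun 'I_m -> U} => expR (mu * pair_coll R h x)) =
  (1 + normp2 q h * (expR mu - 1)) ^+ m./2.
Proof.
have pair_coll_small k : (k <= 1)%N ->
    expectm q (fun x : {ffun 'I_k -> U} => expR (mu * pair_coll R h x)) = 1.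
  move=> k1; rewrite -[RHS](expectm1 q_sum1 k); apply: eq_expectm => x.
  by case: k k1 x => [|[]] // _ x; rewrite /pair_coll big_ord0 mulr0 expR0.
elim: m {-2}m (leqnn m) => [|k IHk] [|[|m]] // mk; try by rewrite pair_coll_small.
rewrite expectm_cons.
under eq_bigr do rewrite expectm_cons mulr_sumr.
rewrite (_ : m.+2./2 = m./2.+1) // exprS -{1}expR_coll_mean mulr_suml; apply: eq_bigr => u _.
rewrite mulr_suml; apply: eq_bigr => v _.
under eq_expectm do rewrite pair_coll_cons2 mulrDr expRD.
by rewrite expectmZ IHk ?mulrA //; lia.
Qed.

Lemma coll_freq_mgf_le m th : (2 <= m)%N ->
  expectm q (fun x : {ffun 'I_m -> U} => expR (th * coll_freq R h x))
  <= expR ((m./2)%:R * normp2 q h * (expR (th / (m./2)%:R) - 1)).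
Proof.
move=> m2; set k : R := (m./2)%:R.
have k0 : k != 0 by rewrite pnatr_eq0 -lt0n half_gt0.
have f0 : m`!%:R != 0 :> R by rewrite pnatr_eq0 -lt0n fact_gt0.
have mean_le x : expR (th * coll_freq R h x) <=
    (m`!%:R)^-1 * \sum_(s : {perm 'I_m}) expR (th / k * pair_coll R h (fperm x s)).
  rewrite coll_freq_mean_pair_coll // mulrCA mulr_sumr -card_Sn.
  under eq_bigr do rewrite mulrA.
  by apply: expR_mean_le; rewrite card_Sn fact_gt0.
apply: le_trans (ler_expectm q_ge0 mean_le) _.
rewrite expectmZ expectm_sum.
under eq_bigr do rewrite (expectm_perm _ _ (fun y => expR (th / k * pair_coll R h y))).
rewrite sumr_const card_Sn -[expectm _ _ *+ _]mulr_natl mulKf //.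
rewrite expectm_expR_pair_coll /k -mulrA expRM_natl.
apply: lerXn2r; rewrite ?nnegrE ?expR_ge0 ?expR_ge1Dx //.
by rewrite -expR_coll_mean; do 2!apply: sumr_ge0 => ? _; rewrite !mulr_ge0 ?expR_ge0.
Qed.

End MomentGeneratingFunction.

Lemma expR_le_quadratic (R : realType) (x : R) : x <= 1 / 2 -> expR x <= 1 + x + 2 * x ^+ 2.
Proof.
move=> x_le; have := expR_ge1Dx (- x); have := expRxMexpNx_1 x; have := expR_gt0 x.
nra.
Qed.

Section Deviation.
Variables (R : realType) (U : finType) (q : U -> R) (n : nat) (h : U -> 'I_n) (m : nat).
Hypotheses (q_ge0 : forall u, 0 <= q u) (q_sum1 : \sum_u q u = 1) (m_ge2 : (2 <= m)%N).

Local Notation k := ((m./2)%:R : R).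
Local Notation p2 := (normp2 q h).
Local Notation Z := (@coll_freq R U n h m).

Lemma coll_freq_tail_le lam a : lam <= 1 / 2 ->
  probm q (fun x => a <= lam * (Z x - p2)) <= expR (k * (2 * p2 * lam ^+ 2 - a)).
Proof.
move=> lam_le; have k0 : k != 0 by rewrite pnatr_eq0 -lt0n half_gt0.
apply: le_trans (probm_le_expectm_expR q_ge0 (g := fun x => k * (lam * (Z x - p2) - a)) _) _.
  by move=> x ha; rewrite mulr_ge0 ?ler0n ?subr_ge0.
rewrite (@eq_expectm _ _ q _ _
  (fun x => expR (- (k * (lam * p2 + a))) * expR (k * lam * Z x))); last first.
  by move=> x; rewrite -expRD; congr expR; ring.
rewrite expectmZ.
apply: le_trans (ler_wpM2l (expR_ge0 _) (coll_freq_mgf_le h q_ge0 q_sum1 _ m_ge2)) _.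
rewrite -expRD ler_expR (mulrC k lam) mulfK //.
have : 0 <= k * p2 * (1 + lam + 2 * lam ^+ 2 - expR lam).
  by rewrite !mulr_ge0 ?ler0n ?normp2_ge0 // subr_ge0 expR_le_quadratic.
lra.
Qed.

Lemma coll_freq_deviation_le t : 0 < p2 -> 0 < t ->
  probm q (fun x => t < `|Z x / p2 - 1|) <=
  if t <= 2 then 2 * expR (- (k * p2 * t ^+ 2 / 8)) else expR (- (k * p2 * (t - 1) / 2)).
Proof.
move=> p2_gt0 t_gt0.
have dev x : t < `|Z x / p2 - 1| -> p2 * t < Z x - p2 \/ p2 * t < p2 - Z x.
  have -> : Z x - p2 = p2 * (Z x / p2 - 1) by field; rewrite gt_eqF.
  have -> : p2 - Z x = p2 * - (Z x / p2 - 1) by field; rewrite gt_eqF.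
  by rewrite !ltr_pM2l // ltr_normr => /orP[]; [left | right].
case: ifP => t_le2.
  (* lam = t/4 minimizes 2 lam^2 - lam t. *)
  apply: le_trans (@le_probm _ _ q q_ge0 _ _ (predU
      (fun x => t / 4 * p2 * t <= t / 4 * (Z x - p2))
      (fun x => t / 4 * p2 * t <= - (t / 4) * (Z x - p2))) _) _.
    move=> x /dev[] dev_x; apply/orP; [left | right];
      by rewrite -mulrA ?mulNr -?mulrN ?opprB ler_pM2l ?divr_gt0 // ltW.
  apply: le_trans (probm_predU q_ge0 _ _) _.
  apply: le_trans (lerD (coll_freq_tail_le _ _) (coll_freq_tail_le _ _)) _; [lra | lra |].
  by rewrite sqrrN (_ : k * _ = - (k * p2 * t ^+ 2 / 8)); [lra | field].
(* For t > 2 the lower tail is empty, since Z >= 0 gives p2 - Z <= p2 < p2 t. *)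
apply: le_trans (@le_probm _ _ q q_ge0 _ _
    (fun x => 1 / 2 * (p2 * t) <= 1 / 2 * (Z x - p2)) _) _.
  move=> x /dev[] dev_x; first by rewrite ler_pM2l ?divr_gt0 // ltW.
  have := coll_freq_ge0 R h x; have : 1 < t by move: t_le2 => /negbT; rewrite -ltNge; lra.
  by nra.
by apply: le_trans (coll_freq_tail_le _ _) _; rewrite ?ler_expR; lra.
Qed.
End Deviation.

Lemma sample_size_bounds (R : realType) (n eps delta s m : R) :
  25 <= n -> 0 < eps -> eps < 1 / 3 -> 0 < delta -> 0 < s ->
  m = eps ^-2 * n `^ (1 + delta) ->
  let t := eps * (3 + 6 * s / n `^ (delta / 2) + 5 * s ^+ 2 * eps / n `^ delta) in
  [/\ 0 < t, 9 * n <= m, (3 + 6 * s) ^+ 2 <= m * t ^+ 2 / n & 9 + 5 * s ^+ 2 <= m * t / n].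
Proof.
move=> n25 eps_gt0 eps_lt delta_gt0 s_gt0 ->; set P := n `^ (delta / 2).
have n_gt0 : 0 < n by lra.
have P_ge1 : 1 <= P.
  by rewrite -(powRr0 n) ler_powR ?divr_ge0 ?ltW //; lra.
have nP2 : n `^ delta = P ^+ 2.
  by rewrite /P -powR_mulrn ?powR_ge0 // -powRrM; congr (_ `^ _); field.
have -> : eps ^-2 * n `^ (1 + delta) = n * P ^+ 2 / eps ^+ 2.
  rewrite powRD; last by rewrite (gt_eqF n_gt0) implybT.
  by rewrite powRr1 ?ltW // nP2; field; rewrite gt_eqF.
rewrite nP2 /=; have P_gt0 : 0 < P by lra.
have P2_ge1 : 1 <= P ^+ 2 by apply: exprn_ege1.
have ratio_ge0 : 0 <= s / P by rewrite divr_ge0 ?ltW.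
have eps2 : eps ^+ 2 <= 1 / 9 by nra.
split.
- by rewrite mulr_gt0 // !addr_gt0 // !mulr_gt0 ?invr_gt0 ?exprn_gt0.
- rewrite ler_pdivlMr ?exprn_gt0 //.
  have : 0 <= n * (P ^+ 2 - 1) by apply: mulr_ge0; lra.
  have : 0 <= n * (1 - 9 * eps ^+ 2) by apply: mulr_ge0; lra.
  lra.
- rewrite (_ : _ / n = (3 * P + 6 * s + 5 * s ^+ 2 * eps / P) ^+ 2); last by field; rewrite !gt_eqF.
  have : 0 <= 5 * s ^+ 2 * eps / P by rewrite !mulr_ge0 ?invr_ge0 ?ltW.
  nra.
rewrite (_ : _ / n = 3 * P ^+ 2 / eps + 6 * s * P / eps + 5 * s ^+ 2);
  last by field; rewrite !gt_eqF.
have : 9 <= 3 * P ^+ 2 / eps by rewrite ler_pdivlMr //; nra.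
have : 0 <= 6 * s * P / eps by rewrite !mulr_ge0 ?invr_ge0 ?ltW.
lra.
Qed.

Lemma deviation_bound_le (R : realType) (s t k p2 m n : R) :
  1 / 2 < s -> 0 < t -> 25 <= n -> n^-1 <= p2 -> 0 <= k -> m - 1 <= 2 * k -> 2 <= m ->
  (3 + 6 * s) ^+ 2 <= m * t ^+ 2 / n -> 9 + 5 * s ^+ 2 <= m * t / n ->
  (if t <= 2 then 2 * expR (- (k * p2 * t ^+ 2 / 8)) else expR (- (k * p2 * (t - 1) / 2)))
  <= 10 / 9 * expR (- s ^+ 2 / 4).
Proof.
move=> s_gt t_gt0 n25 p2_ge k_ge0 k_ge m_ge2 small_t large_t.
have ni_gt0 : 0 < n^-1 by rewrite invr_gt0; lra.
have ni_le : n^-1 <= 1 / 25.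
  have : 25 * n^-1 <= n * n^-1 by rewrite ler_pM2r.
  rewrite mulfV ?gt_eqF //; [lra | lra].
have e_gt0 := expR_gt0 (- s ^+ 2 / 4).
case: ifP => t_le2.
  have : k * p2 * t ^+ 2 / 8 >= s ^+ 2 / 4 + 1.
    have : k * t ^+ 2 * n^-1 <= k * t ^+ 2 * p2.
      by apply: ler_wpM2l => //; exact: mulr_ge0 k_ge0 (sqr_ge0 t).
    have : (m - 1) * (t ^+ 2 * n^-1) <= 2 * k * (t ^+ 2 * n^-1).
      by apply: ler_wpM2r => //; exact: mulr_ge0 (sqr_ge0 t) (ltW ni_gt0).
    have : t ^+ 2 * n^-1 <= 4 / 25 by nra.
    nra.
  move=> exponent_ge; have expRN1_le : expR (-1) <= 1 / 2 :> R.
    by have := expRxMexpNx_1 (1 : R); have := expR_ge1Dx (1 : R); have := expR_gt0 (-1 : R); nra.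
  have : expR (- (k * p2 * t ^+ 2 / 8)) <= expR (- s ^+ 2 / 4) * expR (-1).
    by rewrite -expRD ler_expR; lra.
  have := ler_wpM2l (ltW e_gt0) expRN1_le.
  lra.
have : k * p2 * (t - 1) / 2 >= s ^+ 2 / 4.
  have : k * t * n^-1 <= k * t * p2.
    by apply: ler_wpM2l => //; exact: mulr_ge0 k_ge0 (ltW t_gt0).
  have : (m - 1) * (t * n^-1) <= 2 * k * (t * n^-1).
    by apply: ler_wpM2r => //; exact: mulr_ge0 (ltW t_gt0) (ltW ni_gt0).
  have t_gt2 : 2 < t by rewrite ltNge t_le2.
  have : 0 <= (m / 2 - 1) * (t * n^-1).
    by apply: mulr_ge0; [lra | exact: mulr_ge0 (ltW t_gt0) (ltW ni_gt0)].
  have : 0 <= k * p2 * (t / 2 - 1).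
    by apply: mulr_ge0; [apply: mulr_ge0; lra | lra].
  have := sqr_ge0 s; lra.
move=> exponent_ge; have : expR (- (k * p2 * (t - 1) / 2)) <= expR (- s ^+ 2 / 4).
  by rewrite ler_expR; lra.
lra.
Qed.

Unset Implicit Arguments.

Theorem theorem2 (R : realType) (U : finType) (q : U -> R) (n : nat) (h : U -> 'I_n)
  (eps delta s : R) (m : nat)
  (q_ge0 : forall u, 0 <= q u) (q_sum1 : \sum_u q u = 1)
  (hn : (24 < n)%N) (heps0 : 0 < eps) (heps1 : eps < 1 / 3)
  (hdelta : 0 < delta) (hs : 0 < s)
  (hm : m%:R = eps ^-2 * (n%:R `^ (1 + delta))) :
  probm q (fun x : {ffun 'I_m -> U} =>
    `| (\sum_(i < n) ((kcount h x i)%:R * ((kcount h x i)%:R - 1))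
            / (m%:R * (m%:R - 1))) / normp2 q h - 1 |
      <= eps * (3 + 6 * s / (n%:R `^ (delta / 2)) + 5 * s ^+ 2 * eps / (n%:R `^ delta)))
  >= 1 - 10 / 9 * expR (- s ^+ 2 / 4).
Proof.
have [s_le|s_gt] := lerP s (1 / 2).
  by apply: le_trans (probm_ge0 q_ge0 _); have := expR_ge1Dx (- s ^+ 2 / 4); nra.
have n25 : 25 <= n%:R :> R by rewrite (ler_nat R 25 n).
have n_gt0 : (0 < n)%N by apply: leq_trans hn.
have [] := sample_size_bounds n25 heps0 heps1 hdelta hs hm.
set t := eps * _ => t_gt0 m_ge9n small_t large_t.
have m_ge2 : (2 <= m)%N by rewrite -(ler_nat R); lra.
have half_ge : m%:R - 1 <= 2 * (m./2)%:R :> R.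
  have : (m <= (m./2).*2.+1)%N by rewrite -leq_half_double.
  by rewrite -(ler_nat R) -addn1 natrD -muln2 natrM; lra.
have p2_ge := normp2_ge_inv h q_sum1 n_gt0.
have p2_gt0 : 0 < normp2 q h by apply: lt_le_trans p2_ge; rewrite invr_gt0 ltr0n.
rewrite probmC // lerD2l lerN2.
apply: le_trans (@le_probm _ _ q q_ge0 _ _
  (fun x => t < `|coll_freq R h x / normp2 q h - 1|) _) _.
  by move=> x /=; rewrite -mulr_suml kcount_ncoll -ltNge.
apply: le_trans (coll_freq_deviation_le q_ge0 q_sum1 m_ge2 p2_gt0 t_gt0) _.
by apply: (deviation_bound_le (m := m%:R) (n := n%:R)); rewrite ?ler0n //; lra.
Qed.
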